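(* (1) If $A$ and $B$ are nonpos and $\Psi \vdash A \le^{+} B$, then $\Psi \vdash A \le^{-} B$ by a derivation of the same or smaller size. (2) If $A$ and $B$ are nonneg and $\Psi \vdash A \le^{-} B$, then $\Psi \vdash A \le^{+} B$ by a derivation of the same or smaller size. (3) If $A$ and $B$ are each both nonpos and nonneg, and $\Psi \vdash A \le^{\pm} B$ (for some polarity $\pm$), then $A = B$.
   Context: Sorts are $\kappa \in \{\mathsf{type}, \mathbb{N}\}$. Index terms/monotypes $\tau, t$ are built from $\mathbf{1}$, universal variables $\alpha$, binary connectives $\tau_1 \oplus \tau_2$ with $\oplus \in \{\to, +, \times\}$ (sort $\mathsf{type}$), and $\mathsf{zero}$, $\mathsf{succ}(t)$ (sort $\mathbb{N}$); $\Psi \vdash t : \kappa$ means $t$ has sort $\kappa$ with its variables declared in $\Psi$. Types are $A, B ::= \mathbf{1} \mid \alpha \mid A \oplus B \mid \forall \alpha{:}\kappa.\,A \mid \exists \alpha{:}\kappa.\,A \mid P \supset A \mid A \wedge P \mid \mathsf{Vec}\ t\ A$ with propositions $P ::= t = t'$. A declarative context $\Psi$ is a list of declarations including universal variables $\alpha:\kappa$. A type is positive if headed by $\exists$, negative if headed by $\forall$; nonpos = not positive, nonneg = not negative. The size of a derivation is its number of rule applications. Declarative subtyping $\Psi \vdash A \le^{\pm} B$ is inductively defined by: (Refl) if $\Psi \vdash A\ \mathsf{type}$ and $A$ is nonpos and nonneg then $\Psi \vdash A \le^{\pm} A$; ($\forall$L) $\Psi \vdash \tau : \kappa$ and $\Psi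 \vdash [\tau/\alpha]A \le^- B$ give $\Psi \vdash \forall\alpha{:}\kappa.A \le^- B$; ($\forall$R) $\Psi, \beta{:}\kappa \vdash A \le^- B$ gives $\Psi \vdash A \le^- \forall\beta{:}\kappa.B$; ($\exists$L) $\Psi, \alpha{:}\kappa \vdash A \le^+ B$ gives $\Psi \vdash \exists\alpha{:}\kappa.A \le^+ B$; ($\exists$R) $\Psi \vdash \tau:\kappa$ and $\Psi \vdash A \le^+ [\tau/\beta]B$ give $\Psi \vdash A \le^+ \exists\beta{:}\kappa.B$; ($-{+}$) $\Psi \vdash A \le^- B$ with $A,B$ nonpos gives $\Psi \vdash A \le^+ B$; ($+{-}$) $\Psi \vdash A \le^+ B$ with $A,B$ nonneg gives $\Psi \vdash A \le^- B$. *)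

(* Declarative subtyping of Dunfield & Krishnaswami style,
   with de Bruijn indices for universal type/index variables. *)
From Stdlib Require Import Arith List.
Import ListNotations.

Inductive sort : Type := SType | SNat.

Inductive binop : Type := OArrow | OSum | OProd.

(* One syntax for index terms / monotypes and types (sorting and
   well-formedness judgments below pick out the legal ones).
   TVar n is a de Bruijn index (0 = innermost binder / most recent
   universal variable declaration of the context). *)
Inductive ty : Type :=
| TUnit : ty
| TVar : nat -> ty
| TBin : binop -> ty -> ty -> ty
| TForall : sort -> ty -> ty
| TExists : sort -> ty -> ty
| TImp : prop -> ty -> ty
| TWith : ty -> prop -> ty
| TVec : ty -> ty -> ty
| TZero : ty
| TSucc : ty -> ty
with prop : Type :=
| PEq : ty -> ty -> prop.

Fixpoint lift (c : nat) (A : ty) : ty :=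
  match A with
  | TUnit => TUnit
  | TVar n => if n <? c then TVar n else TVar (S n)
  | TBin o A1 A2 => TBin o (lift c A1) (lift c A2)
  | TForall k A1 => TForall k (lift (S c) A1)
  | TExists k A1 => TExists k (lift (S c) A1)
  | TImp P A1 => TImp (liftP c P) (lift c A1)
  | TWith A1 P => TWith (lift c A1) (liftP c P)
  | TVec t A1 => TVec (lift c t) (lift c A1)
  | TZero => TZero
  | TSucc t => TSucc (lift c t)
  end
with liftP (c : nat) (P : prop) : prop :=
  match P with PEq t1 t2 => PEq (lift c t1) (lift c t2) end.

Fixpoint liftn (k : nat) (A : ty) : ty :=
  match k with 0 => A | S k' => lift 0 (liftn k' A) end.

(* subst_at k s A : replace index k by s (s lives outside the k binders),
   decrementing the indices above k (capture-avoiding substitution). *)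
Fixpoint subst_at (k : nat) (s : ty) (A : ty) : ty :=
  match A with
  | TUnit => TUnit
  | TVar n => if n <? k then TVar n
              else if n =? k then liftn k s else TVar (pred n)
  | TBin o A1 A2 => TBin o (subst_at k s A1) (subst_at k s A2)
  | TForall k' A1 => TForall k' (subst_at (S k) s A1)
  | TExists k' A1 => TExists k' (subst_at (S k) s A1)
  | TImp P A1 => TImp (substP_at k s P) (subst_at k s A1)
  | TWith A1 P => TWith (subst_at k s A1) (substP_at k s P)
  | TVec t A1 => TVec (subst_at k s t) (subst_at k s A1)
  | TZero => TZero
  | TSucc t => TSucc (subst_at k s t)
  end
with substP_at (k : nat) (s : ty) (P : prop) : prop :=
  match P with PEq t1 t2 => PEq (subst_at k s t1) (subst_at k s t2) end.

Definition open (A : ty) (tau : ty) : ty := subst_at 0 tau A.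

(* Declarations of a declarative context: universal variables alpha:kappa
   and term variables x : A (with a principality flag); the head of the
   list is the most recent declaration. *)
Inductive decl : Type :=
| DUniv : sort -> decl
| DTerm : nat -> ty -> bool -> decl.

Definition ctx := list decl.

Fixpoint lookup (Psi : ctx) (n : nat) : option sort :=
  match Psi with
  | [] => None
  | DUniv k :: Psi' => match n with 0 => Some k | S n' => lookup Psi' n' end
  | DTerm _ _ _ :: Psi' => lookup Psi' n
  end.

Inductive has_sort : ctx -> ty -> sort -> Prop :=
| SVar : forall Psi n k, lookup Psi n = Some k -> has_sort Psi (TVar n) k
| SUnit : forall Psi, has_sort Psi TUnit SType
| SBin : forall Psi o t1 t2,
    has_sort Psi t1 SType -> has_sort Psi t2 SType -> has_sort Psi (TBin o t1 t2) SType
| SZero : forall Psi, has_sort Psi TZero SNat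
| SSucc : forall Psi t, has_sort Psi t SNat -> has_sort Psi (TSucc t) SNat.

Inductive wf_prop : ctx -> prop -> Prop :=
| WFEq : forall Psi t t', has_sort Psi t SNat -> has_sort Psi t' SNat ->
    wf_prop Psi (PEq t t').

Inductive wf_type : ctx -> ty -> Prop :=
| WVar : forall Psi n, lookup Psi n = Some SType -> wf_type Psi (TVar n)
| WUnit : forall Psi, wf_type Psi TUnit
| WBin : forall Psi o A B, wf_type Psi A -> wf_type Psi B -> wf_type Psi (TBin o A B)
| WForall : forall Psi k A, wf_type (DUniv k :: Psi) A -> wf_type Psi (TForall k A)
| WExists : forall Psi k A, wf_type (DUniv k :: Psi) A -> wf_type Psi (TExists k A)
| WImp : forall Psi P A, wf_prop Psi P -> wf_type Psi A -> wf_type Psi (TImp P A)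
| WWith : forall Psi P A, wf_prop Psi P -> wf_type Psi A -> wf_type Psi (TWith A P)
| WVec : forall Psi t A, has_sort Psi t SNat -> wf_type Psi A -> wf_type Psi (TVec t A).

Definition positive (A : ty) : bool :=
  match A with TExists _ _ => true | _ => false end.
Definition negative (A : ty) : bool :=
  match A with TForall _ _ => true | _ => false end.
Definition nonpos (A : ty) : bool := negb (positive A).
Definition nonneg (A : ty) : bool := negb (negative A).

Inductive polarity : Type := Pos | Neg.

(* sub Psi pol A B n : a derivation of Psi |- A <=^pol B with n rule applications *)
Inductive sub : ctx -> polarity -> ty -> ty -> nat -> Prop :=
| SubRefl : forall Psi p A,
    wf_type Psi A -> nonpos A = true -> nonneg A = true ->
    sub Psi p A A 1
| SubForallL : forall Psi k tau A B n,
    has_sort Psi tau k -> sub Psi Neg (open A tau) B n ->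
    sub Psi Neg (TForall k A) B (S n)
| SubForallR : forall Psi k A B n,
    sub (DUniv k :: Psi) Neg (lift 0 A) B n ->
    sub Psi Neg A (TForall k B) (S n)
| SubExistsL : forall Psi k A B n,
    sub (DUniv k :: Psi) Pos A (lift 0 B) n ->
    sub Psi Pos (TExists k A) B (S n)
| SubExistsR : forall Psi k tau A B n,
    has_sort Psi tau k -> sub Psi Pos A (open B tau) n ->
    sub Psi Pos A (TExists k B) (S n)
| SubNegPos : forall Psi A B n,
    sub Psi Neg A B n -> nonpos A = true -> nonpos B = true ->
    sub Psi Pos A B (S n)
| SubPosNeg : forall Psi A B n,
    sub Psi Pos A B n -> nonneg A = true -> nonneg B = true ->
    sub Psi Neg A B (S n).

From Stdlib Require Import Lia.

(* A derivation of [A <=^+ B] between nonpositive types cannot end with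
   [exists]L or [exists]R, so it is either reflexivity (which holds at either
   polarity) or a polarity switch whose premise is already the [<=^-]
   derivation sought; dually for [<=^-]. For types that are both nonpositive
   and nonnegative no quantifier rule applies, so only reflexivity and the
   polarity switches remain, and none of these changes the types. *)

Lemma sub_pos_nonpos_neg (Psi : ctx) (A B : ty) (n : nat) :
  nonpos A = true -> nonpos B = true -> sub Psi Pos A B n ->
  exists m, m <= n /\ sub Psi Neg A B m.
Proof.
  intros HA HB Hsub; inversion Hsub; subst; simpl in *; try discriminate.
  - exists 1; split; [lia | now constructor].
  - exists n0; split; [lia | assumption].
Qed.

Lemma sub_neg_nonneg_pos (Psi : ctx) (A B : ty) (n : nat) :
  nonneg A = true -> nonneg B = true -> sub Psi Neg A B n ->
  exists m, m <= n /\ sub Psi Pos A B m.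
Proof.
  intros HA HB Hsub; inversion Hsub; subst; simpl in *; try discriminate.
  - exists 1; split; [lia | now constructor].
  - exists n0; split; [lia | assumption].
Qed.

Lemma sub_neutral_eq (Psi : ctx) (p : polarity) (A B : ty) (n : nat) :
  sub Psi p A B n ->
  nonpos A = true -> nonneg A = true ->
  nonpos B = true -> nonneg B = true -> A = B.
Proof.
  induction 1; intros; simpl in *; try discriminate; auto.
Qed.

Theorem mainTheorem3 :
  (forall (Psi : ctx) (A B : ty) (n : nat),
      nonpos A = true -> nonpos B = true -> sub Psi Pos A B n ->
      exists m, m <= n /\ sub Psi Neg A B m) /\
  (forall (Psi : ctx) (A B : ty) (n : nat),
      nonneg A = true -> nonneg B = true -> sub Psi Neg A B n ->
      exists m, m <= n /\ sub Psi Pos A B m) /\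
  (forall (Psi : ctx) (p : polarity) (A B : ty) (n : nat),
      nonpos A = true -> nonneg A = true ->
      nonpos B = true -> nonneg B = true ->
      sub Psi p A B n -> A = B).
Proof.
  split; [exact sub_pos_nonpos_neg | split; [exact sub_neg_nonneg_pos |]].
  intros Psi p A B n HA1 HA2 HB1 HB2 Hsub.
  exact (sub_neutral_eq Psi p A B n Hsub HA1 HA2 HB1 HB2).
Qed.
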